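(* Let $I(z)$ be a nonzero polynomial solution of the KZ system over $\mathbb{F}_p$ with $\mathrm{id}$-leading term $C z_1^{d_1}\cdots z_n^{d_n}$, $C\in\mathbb{F}_p^n$. Then $$\sum_{j=1}^nM_jC_j=0,\qquad \Omega^M_jC=d_jC\ \ (j=1,\dots,n-1),\qquad d_n\equiv0\pmod p,$$ with equalities in $\mathbb{F}_p$.
   Context: Let $p,q$ be primes and $n$ a positive integer with $p>n\ge2$, $p>q$. Fix positive integers $m_1,\dots,m_n<q$; $M_i$ is the least positive integer with $M_i\equiv -m_iq^{-1}\pmod p$. For $i\ne j$ let $\Omega_{ij}$ be the $n\times n$ matrix with only nonzero entries $(\Omega_{ij})_{ii}=-m_j$, $(\Omega_{ij})_{ij}=m_j$, $(\Omega_{ij})_{ji}=m_i$, $(\Omega_{ij})_{jj}=-m_i$. A polynomial solution of the KZ system over $\mathbb{F}_p$ is $I\in\mathbb{F}_p[z_1,\dots,z_n]^n$ with $\partial I/\partial z_i=q^{-1}\sum_{j\ne i}\Omega_{ij}I/(z_i-z_j)$ for all $i$ and $\sum_im_iI_i=0$. For $j\ne l$, $\Omega^M_{jl}$ is the $n\times n$ matrix over $\mathbb{F}_p$ with only nonzero entries $(\Omega^M_{jl})_{jj}=M_l$, $(\Omega^M_{jl})_{jl}=-M_l$, $(\Omega^M_{jl})_{lj}=-M_j$, $(\Omega^M_{jl})_{ll}=M_j$; $\Omega^M_j=\sum_{l=j+1}^n\Omega^M_{jl}$. Monomials are ordered lexicographically with $z_1>\dots>z_n$, and the $\mathrm{id}$-leading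 term of a nonzero $f\in\mathbb{F}_p[z]^n$ is $az^d$ with $z^d$ the largest monomial with nonzero coefficient $a\in\mathbb{F}_p^n$. *)

From HB Require Import structures.
From mathcomp Require Import all_boot all_order all_algebra.
From mathcomp Require Import fraction.
From mathcomp Require Export mpoly.
Unset Printing Implicit Defensive.
Import Order.TTheory GRing.Theory Num.Theory.
Local Open Scope ring_scope.

(* Variables z_1,...,z_n are indexed by 'I_n (z_{k+1} <-> index k). *)

Definition Omega (R : pzRingType) (n : nat) (m : 'I_n -> nat) (i j : 'I_n)
  : 'M[R]_n :=
  \matrix_(a, b)
    if (a == i) && (b == i) then - (m j)%:R
    else if (a == i) && (b == j) then (m j)%:R
    else if (a == j) && (b == i) then (m i)%:R
    else if (a == j) && (b == j) then - (m i)%:R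
    else 0.

(* M_i : least positive integer with M_i = - m_i q^{-1} (mod p) *)
Definition Mnat (p q : nat) (n : nat) (m : 'I_n -> nat) (i : 'I_n) : nat :=
  let r := nat_of_ord (- (m i)%:R / q%:R : 'F_p) in
  if r == 0%N then p else r.

Definition OmegaM (p q n : nat) (m : 'I_n -> nat) (j l : 'I_n) : 'M['F_p]_n :=
  let M := Mnat p q n m in
  \matrix_(a, b)
    if (a == j) && (b == j) then (M l)%:R
    else if (a == j) && (b == l) then - (M l)%:R
    else if (a == l) && (b == j) then - (M j)%:R
    else if (a == l) && (b == l) then (M j)%:R
    else 0.

Definition OmegaMj (p q n : nat) (m : 'I_n -> nat) (j : 'I_n) : 'M['F_p]_n :=
  \sum_(l < n | (j < l)%N) OmegaM p q n m j l.

Notation polF p n := {mpoly 'F_p[n]}.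
Notation fracF p n := {fraction {mpoly 'F_p[n]}}.
Notation tofrac := (@FracField.tofrac _).

Definition KZ_solution (p q n : nat) (m : 'I_n -> nat)
  (I : 'cV[polF p n]_n) : Prop :=
  (forall i : 'I_n,
     map_mx (@FracField.tofrac _) (map_mx (mderiv i) I)
     = (q%:R : fracF p n)^-1 *:
         \sum_(j < n | j != i)
           (FracField.tofrac ('X_i - 'X_j))^-1 *:
             (Omega (fracF p n) n m i j *m map_mx (@FracField.tofrac _) I))
  /\ \sum_(i < n) (m i)%:R *: I i 0 = 0.

(* Lexicographic order on monomials with z_1 > ... > z_n:
   d <=lex e iff d = e or at the first index where they differ d < e. *)
Definition mlex_le (n : nat) (d e : 'X_{1..n}) : bool :=
  [forall i : 'I_n,
     [forall j : 'I_n, (j < i)%N ==> (d j == e j)] ==> (d i <= e i)%N].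

Definition id_leading_term (p n : nat) (I : 'cV[polF p n]_n)
  (C : 'cV['F_p]_n) (d : 'X_{1..n}) : Prop :=
  C != 0
  /\ (forall a : 'I_n, C a 0 = (I a 0)@_d)
  /\ (forall (e : 'X_{1..n}) (a : 'I_n), (I a 0)@_e != 0 -> mlex_le n e d).

From HB Require Import structures.
From mathcomp Require Import all_boot all_order all_algebra.
From mathcomp Require Import fraction mpoly.
From mathcomp Require Import zify ring.
Import GRing.Theory.
Set Implicit Arguments.
Unset Strict Implicit.
Local Open Scope ring_scope.

(* Clearing denominators in the j-th KZ equation by z_j * prod_(l != j) (z_j - z_l) gives a
   polynomial identity. Lexicographic leading terms are multiplicative, and the leading term
   of z_j - z_l is z_j for l > j and -z_l for l < j. So at the monomial
   z^d * lead(prod_(l != j) (z_j - z_l)) the left side has coefficient q d_j C (up to the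
   common leading coefficient of the product), while on the right only the summands with
   l > j reach it, contributing sum_(l > j) Omega_jl C. As Omega^M_jl = q^-1 Omega_jl, this is
   Omega^M_j C = d_j C for every j; for j = n the sum is empty, so d_n = 0 in F_p as C != 0.
   Finally sum_j M_j C_j = 0 is the z^d-coefficient of sum_i m_i I_i = 0, as M_j = -m_j/q. *)

Section LexOrder.
Variable n : nat.
Implicit Types a b d e : 'X_{1..n}.

Lemma mlexP a b :
  reflect (forall i : 'I_n, (forall j : 'I_n, (j < i)%N -> a j = b j) -> (a i <= b i)%N)
          (mlex_le n a b).
Proof.
apply: (iffP forallP) => [le_ab i eq_lt | le_ab i].
  by apply: (implyP (le_ab i)); apply/forallP => j; apply/implyP => /eq_lt ->.
by apply/implyP => /forallP eq_lt; apply: le_ab => j /(implyP (eq_lt j)) /eqP.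
Qed.

Lemma mlex_le_refl a : mlex_le n a a.
Proof. by apply/mlexP. Qed.

Lemma mlex_le_add_prefix a b d e k :
  mlex_le n a d -> mlex_le n b e ->
  (forall i : 'I_n, (i < k)%N -> (a i + b i = d i + e i)%N) ->
  forall i : 'I_n, (i < k)%N -> a i = d i /\ b i = e i.
Proof.
move=> /mlexP le_ad /mlexP le_be; elim: k => [//|k IH] sum_eq i lt_ik.
have {}IH := IH (fun j lt_jk => sum_eq j (ltnW lt_jk)).
have [/IH //|ge_ik] := ltnP i k.
have below (j : 'I_n) : (j < i)%N -> a j = d j /\ b j = e j by move=> lt_ji; apply: IH; lia.
have := le_ad i (fun j lt_ji => (below j lt_ji).1).
have := le_be i (fun j lt_ji => (below j lt_ji).2).
have := sum_eq i lt_ik; lia.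
Qed.

Lemma mlex_le_add_eq a b d e :
  mlex_le n a d -> mlex_le n b e -> (a + b = d + e)%MM -> a = d /\ b = e.
Proof.
move=> le_ad le_be sum_eq.
have sum_eqi (i : 'I_n) : (i < n)%N -> (a i + b i = d i + e i)%N by rewrite -!mnmDE sum_eq.
have agree := mlex_le_add_prefix le_ad le_be sum_eqi.
by split; apply/mnmP => i; case: (agree i (ltn_ord i)).
Qed.

Lemma mlex_le_anti a b : mlex_le n a b -> mlex_le n b a -> a = b.
Proof. by move=> le_ab le_ba; case: (mlex_le_add_eq le_ab le_ba (addmC a b)). Qed.

Lemma mlex_le_add a b d e :
  mlex_le n a d -> mlex_le n b e -> mlex_le n (a + b) (d + e).
Proof.
move=> le_ad le_be; apply/mlexP => i eq_lt.
have sum_eqi (j : 'I_n) : (j < i)%N -> (a j + b j = d j + e j)%N.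
  by move=> lt_ji; rewrite -!mnmDE eq_lt.
have agree := mlex_le_add_prefix le_ad le_be sum_eqi.
move/mlexP: le_ad => le_ad; move/mlexP: le_be => le_be.
rewrite !mnmDE leq_add //; [apply: le_ad | apply: le_be] => j /agree []//.
Qed.

Lemma mlex_le_mnm1 (i j : 'I_n) : (i < j)%N -> mlex_le n U_(j) U_(i).
Proof.
move=> lt_ij; apply/mlexP => k eq_lt; rewrite !mnm1E -!val_eqE /=.
have [lt_ik|le_ki] := ltnP i k; last by case: eqP; lia.
by move: (eq_lt i lt_ik); rewrite !mnm1E -!val_eqE /= eqxx; case: eqP; lia.
Qed.

Lemma mlex_le_mnm1_addr (i j : 'I_n) e :
  (i < j)%N -> ~~ mlex_le n (U_(i) + e) (U_(j) + e).
Proof.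
move=> lt_ij; apply/negP => le_ij.
have le_ji := mlex_le_add (mlex_le_mnm1 lt_ij) (mlex_le_refl e).
move/addIm/mnmP/(_ i): (mlex_le_anti le_ij le_ji); rewrite !mnm1E eqxx.
by case: eqP => // /(congr1 val) /=; lia.
Qed.

End LexOrder.

Section LexLeading.
Variables (n : nat) (R : idomainType).
Implicit Types (f g : {mpoly R[n]}) (D : 'X_{1..n}) (c : R).

Definition lex_bounded f D := forall e, f@_e != 0 -> mlex_le n e D.

(* [c] may be zero, in which case this only bounds the support of [f]. *)
Definition lex_leading f D c := lex_bounded f D /\ f@_D = c.

Lemma mcoeffM_neq0 f g e :
  (f * g)@_e != 0 -> exists a b, [/\ f@_a != 0, g@_b != 0 & e = (a + b)%MM].
Proof.
rewrite -mcoeff_msupp => /msuppM_le /allpairsP [[a b] [/= fa gb ->]].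
by exists a, b; rewrite -!mcoeff_msupp.
Qed.

Lemma lex_boundedM f g D1 D2 :
  lex_bounded f D1 -> lex_bounded g D2 -> lex_bounded (f * g) (D1 + D2).
Proof.
move=> bf bg e /mcoeffM_neq0 [a [b [fa gb ->]]].
exact: mlex_le_add (bf _ fa) (bg _ gb).
Qed.

Lemma lex_leading_mcoeffM0 f g D1 D2 :
  lex_leading f D1 0 -> lex_bounded g D2 -> (f * g)@_(D1 + D2) = 0.
Proof.
move=> [bf f0] bg; apply/eqP/negP => /negP /mcoeffM_neq0 [a [b [fa gb sum_eq]]].
have [a_eq _] := mlex_le_add_eq (bf _ fa) (bg _ gb) (esym sum_eq).
by move: fa; rewrite a_eq f0 eqxx.
Qed.

Lemma lex_leadingM f g D1 D2 c1 c2 :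
  lex_leading f D1 c1 -> lex_leading g D2 c2 ->
  lex_leading (f * g) (D1 + D2) (c1 * c2).
Proof.
move=> [bf fD1] [bg gD2]; split; first exact: lex_boundedM.
pose r := f - c1 *: 'X_[D1].
have lead_r : lex_leading r D1 0.
  split; last by rewrite mcoeffB mcoeffZ mcoeffX eqxx mulr1 fD1 subrr.
  move=> e; rewrite mcoeffB mcoeffZ mcoeffX.
  have [<- _|_] := eqVneq D1 e; first exact: mlex_le_refl.
  by rewrite mulr0 subr0; apply: bf.
have -> : f = c1 *: 'X_[D1] + r by rewrite addrC subrK.
rewrite mulrDl mcoeffD (lex_leading_mcoeffM0 lead_r bg) addr0 -scalerAl mcoeffZ.
by rewrite [X in X@__]mulrC mcoeffMX gD2.
Qed.

Lemma lex_leadingZ f D c k : lex_leading f D c -> lex_leading (k *: f) D (k * c).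
Proof.
move=> [bf fD]; split; last by rewrite mcoeffZ fD.
by move=> e; rewrite mcoeffZ mulf_eq0 negb_or => /andP [_ /bf].
Qed.

Lemma lex_leadingX D : lex_leading 'X_[D] D 1.
Proof.
split; last by rewrite mcoeffX eqxx.
by move=> e; rewrite mcoeffX; have [->|] := eqVneq D e; rewrite ?eqxx // => _; apply: mlex_le_refl.
Qed.

Lemma lex_leading_XsubX (i j : 'I_n) :
  (i < j)%N -> lex_leading ('X_i - 'X_j) U_(i) 1.
Proof.
move=> lt_ij; have U_neq : (U_(j) == U_(i) :> 'X_{1..n})%MM = false.
  by apply/negP => /eqP /mnmP /(_ i); rewrite !mnm1E eqxx -val_eqE /=; case: eqP; lia.
split; last by rewrite mcoeffB !mcoeffX eqxx U_neq subr0.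
move=> e; rewrite mcoeffB !mcoeffX.
have [<- _|_] := eqVneq U_(i)%MM e; first exact: mlex_le_refl.
have [<- _|_] := eqVneq U_(j)%MM e; first exact: mlex_le_mnm1.
by rewrite subrr eqxx.
Qed.

Lemma lex_leading_XsubX_gt (i j : 'I_n) :
  (j < i)%N -> lex_leading ('X_i - 'X_j) U_(j) (-1).
Proof.
move=> lt_ji; have := lex_leadingZ (-1) (lex_leading_XsubX lt_ji).
by rewrite scaleN1r opprB mulr1.
Qed.

Lemma mcoeff_mulX_mderiv (i : 'I_n) f e : ('X_i * mderiv i f)@_e = f@_e *+ e i.
Proof.
rewrite mulrC; have [e_i0|e_i_gt0] := posnP (e i).
  rewrite e_i0 mulr0n; apply/eqP/negP => /negP.
  rewrite -mcoeff_msupp (perm_mem (msuppMX _ _)) => /mapP [e' _ e_eq].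
  by move: e_i0; rewrite e_eq mnmDE mnm1E eqxx /=; lia.
have e_eq : e = (U_(i) + (e - U_(i)))%MM.
  apply/mnmP => k; rewrite mnmDE mnmBE mnm1E.
  by case: (eqVneq i k) => [<-|]; rewrite /=; lia.
rewrite [in LHS]e_eq mcoeffMX mcoeff_deriv addmC -e_eq mnmBE mnm1E eqxx.
by congr (_ *+ _); lia.
Qed.

Lemma lex_leading_mulX_mderiv (i : 'I_n) f D c :
  lex_leading f D c -> lex_leading ('X_i * mderiv i f) D (c *+ D i).
Proof.
move=> [bf fD]; split; last by rewrite mcoeff_mulX_mderiv fD.
move=> e; rewrite mcoeff_mulX_mderiv => nz; apply: bf.
by apply: contraNneq nz => ->; rewrite mul0rn.
Qed.

Lemma lex_leading_prod (T : Type) (r : seq T) (P : pred T) (F : T -> {mpoly R[n]}) :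
  (forall k, P k -> exists D c, lex_leading (F k) D c /\ c != 0) ->
  exists D c, lex_leading (\prod_(k <- r | P k) F k) D c /\ c != 0.
Proof.
move=> lead_F; elim: r => [|x r [D [c [lead_r c_neq0]]]].
  by exists 0%MM, 1; rewrite big_nil -mpolyX0; split; [apply: lex_leadingX | apply: oner_neq0].
rewrite big_cons; case: ifP => [Px|_]; last by exists D, c.
have [Dx [cx [lead_x cx_neq0]]] := lead_F x Px.
by exists (Dx + D)%MM, (cx * c); split; [apply: lex_leadingM | apply: mulf_neq0].
Qed.

Lemma lex_leading_neq0 f D c : lex_leading f D c -> c != 0 -> f != 0.
Proof. by move=> [_ <-]; apply: contraNneq => ->; rewrite mcoeff0. Qed.

Lemma lex_leading_uniq f D c D' c' :
  lex_leading f D c -> c != 0 -> lex_leading f D' c' -> c' != 0 -> D = D' /\ c = c'.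
Proof.
move=> [bf fD] c_neq0 [bf' fD'] c'_neq0.
have eqD : D = D' by apply: mlex_le_anti; [apply: bf'; rewrite fD | apply: bf; rewrite fD'].
by split; rewrite // -fD -fD' eqD.
Qed.

Lemma lex_leading_mulmx r s (A : 'M[R]_(r, s)) (I : 'cV[{mpoly R[n]}]_s)
    (C : 'cV[R]_s) D :
  (forall b, lex_leading (I b 0) D (C b 0)) ->
  forall a, lex_leading ((map_mx (@mpolyC n R) A *m I) a 0) D ((A *m C) a 0).
Proof.
move=> lead_I a.
have coefE e : ((map_mx (@mpolyC n R) A *m I) a 0)@_e = \sum_b A a b * (I b 0)@_e.
  by rewrite mxE raddf_sum; apply: eq_bigr => b _; rewrite mxE; exact: mcoeffCM.
split; last by rewrite coefE mxE; apply: eq_bigr => b _; rewrite (lead_I b).2.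
move=> e; rewrite coefE; elim/big_ind: _ => [|x y IHx IHy|b _]; first by rewrite eqxx.
  by have [-> | /IHx //] := eqVneq x 0; rewrite add0r.
by rewrite mulf_eq0 negb_or => /andP [_ /(lead_I b).1].
Qed.

End LexLeading.

Arguments lex_leadingX {n R} D.
Arguments lex_leading_XsubX {n R i j}.
Arguments lex_leading_XsubX_gt {n R i j}.
Lemma map_Omega (R S : pzRingType) (f : {rmorphism R -> S}) n (m : 'I_n -> nat) i j :
  map_mx f (Omega R n m i j) = Omega S n m i j.
Proof.
apply/matrixP => a b; rewrite !mxE.
by repeat case: ifP => _; rewrite ?rmorphN ?rmorph_nat ?rmorph0.
Qed.

Lemma OmegaMj_last p q n (m : 'I_n -> nat) (j : 'I_n) :
  nat_of_ord j = n.-1 -> OmegaMj p q n m j = 0.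
Proof.
by move=> j_last; rewrite /OmegaMj big_pred0 // => l; have := ltn_ord l; lia.
Qed.

Section KZLeadingTerm.
Variables (p q n : nat) (m : 'I_n -> nat).
Hypotheses (p_prime : prime p) (q_neq0 : (q%:R : 'F_p) != 0).
Local Notation P := {mpoly 'F_p[n]}.
Local Notation "x %:F" := (@FracField.tofrac _ x).

Lemma Mnat_val i : ((Mnat p q n m i)%:R : 'F_p) = - (m i)%:R / q%:R.
Proof.
rewrite /Mnat; set x := (- (m i)%:R / q%:R : 'F_p).
case: eqP => [x0|_]; first by rewrite pchar_Fp_0 //; apply/val_inj; exact: esym x0.
apply: val_inj => /=; rewrite val_Fp_nat // modn_small //.
by move: (ltn_ord x); rewrite [in X in (_ < X)%N -> _]Fp_cast.
Qed.

Lemma OmegaM_scale j l : OmegaM p q n m j l = (q%:R)^-1 *: Omega 'F_p n m j l.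
Proof.
apply/matrixP => a b; rewrite !mxE !Mnat_val.
by repeat case: ifP => _; rewrite ?mulr0 //; ring.
Qed.

Lemma sum_Mnat_leading I C d :
  KZ_solution p q n m I -> id_leading_term p n I C d ->
  \sum_(j < n) (Mnat p q n m j)%:R * C j 0 = 0.
Proof.
move=> [_ sum_mI0] [_ [IC _]].
have sum_mC0 : \sum_(i < n) (m i)%:R * C i 0 = 0.
  transitivity (\sum_(i < n) ((m i)%:R *: I i 0)@_d).
    by apply: eq_bigr => i _; rewrite IC mcoeffZ.
  by rewrite -raddf_sum sum_mI0 raddf0.
rewrite (eq_bigr (fun i => - (q%:R)^-1 * ((m i)%:R * C i 0))) => [|i _].
  by rewrite -mulr_sumr sum_mC0 mulr0.
by rewrite Mnat_val; ring.
Qed.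

Definition diff_prod (j : 'I_n) : P := \prod_(l < n | l != j) ('X_j - 'X_l).

Definition diff_prod_but (j l : 'I_n) : P :=
  \prod_(k < n | (k != j) && (k != l)) ('X_j - 'X_k).

Lemma diff_prodD1 j l : l != j -> diff_prod j = ('X_j - 'X_l) * diff_prod_but j l.
Proof. by move=> l_neq_j; rewrite /diff_prod (bigD1 l). Qed.

Lemma XsubX_lex_leading (i j : 'I_n) :
  i != j -> exists D c, lex_leading ('X_i - 'X_j : P) D c /\ c != 0.
Proof.
move=> i_neq_j; have [lt_ij|lt_ji|eq_ij] := ltngtP i j.
- by exists U_(i)%MM, 1; split; [apply: lex_leading_XsubX | apply: oner_neq0].
- by exists U_(j)%MM, (-1); split; [apply: lex_leading_XsubX_gt | rewrite oppr_eq0 oner_neq0].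
- by move: i_neq_j; rewrite -val_eqE /= eq_ij eqxx.
Qed.

Lemma KZ_cleared I j a : KZ_solution p q n m I ->
  q%:R * mderiv j (I a 0) * diff_prod j
  = \sum_(l < n | l != j) diff_prod_but j l * (Omega P n m j l *m I) a 0.
Proof.
move=> [KZ _]; apply/eqP; rewrite -tofrac_eq; apply/eqP.
have dI_eq : tofrac (mderiv j (I a 0)) = (q%:R)^-1 *
    \sum_(l < n | l != j) (tofrac ('X_j - 'X_l))^-1 * tofrac ((Omega P n m j l *m I) a 0).
  move/matrixP: (KZ j) => /(_ a 0); rewrite !mxE summxE => ->; congr (_ * _).
  apply: eq_bigr => l _.
  by rewrite -(map_Omega (@FracField.tofrac _)) -map_mxM [LHS]mxE [X in _ * X]mxE.
have q_frac_neq0 : (q%:R : fracF p n) != 0.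
  by rewrite -(rmorph_nat (@FracField.tofrac _)) tofrac_eq0 -(rmorph_nat (@mpolyC n 'F_p)) mpolyC_eq0.
rewrite !rmorphM /= rmorph_nat dI_eq mulrA mulfV // mul1r rmorph_sum mulr_suml.
apply: eq_bigr => l l_neq_j; rewrite (diff_prodD1 l_neq_j) !rmorphM /=.
move: l_neq_j; rewrite eq_sym => /XsubX_lex_leading [D [c [lead_X c_neq0]]].
have X_neq0 : ('X_j - 'X_l : P)%:F != 0 by rewrite tofrac_eq0 (lex_leading_neq0 lead_X).
by rewrite mulrCA mulrA mulVKf // mulrC.
Qed.

Lemma mcoeff_KZ_summand j l D s Y d y :
  l != j -> lex_leading (diff_prod j) D s -> s != 0 -> lex_leading Y d y ->
  ('X_j * diff_prod_but j l * Y)@_(d + D) = if (j < l)%N then s * y else 0.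
Proof.
move=> l_neq_j lead_P s_neq0 lead_Y.
have [Dl [sl [lead_Pl sl_neq0]]] :
    exists Dl sl, lex_leading (diff_prod_but j l) Dl sl /\ sl != 0.
  by apply: lex_leading_prod => k /andP [k_neq_j _]; apply: XsubX_lex_leading; rewrite eq_sym.
have lead_XPlY := lex_leadingM (lex_leadingM (lex_leadingX U_(j)) lead_Pl) lead_Y.
have [lt_jl|lt_lj|eq_jl] := ltngtP j l.
- have lead_P' := lex_leadingM (lex_leading_XsubX lt_jl) lead_Pl.
  rewrite -diff_prodD1 // mul1r in lead_P'.
  have [-> ->] := lex_leading_uniq lead_P s_neq0 lead_P' sl_neq0.
  by rewrite addmC lead_XPlY.2 mul1r.
- have lead_P' := lex_leadingM (lex_leading_XsubX_gt lt_lj) lead_Pl.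
  rewrite -diff_prodD1 // in lead_P'.
  have sgn_neq0 : -1 * sl != 0 by rewrite mulN1r oppr_eq0.
  have [-> _] := lex_leading_uniq lead_P s_neq0 lead_P' sgn_neq0.
  apply/eqP/negP => /negP /lead_XPlY.1; rewrite addmC -!addmA.
  exact/negP/mlex_le_mnm1_addr.
- by move: l_neq_j; rewrite -val_eqE /= eq_jl eqxx.
Qed.

Lemma KZ_OmegaMj I C d j :
  KZ_solution p q n m I -> id_leading_term p n I C d ->
  OmegaMj p q n m j *m C = (d j)%:R *: C.
Proof.
move=> KZ [_ [IC bI]].
have lead_I b : lex_leading (I b 0) d (C b 0) by split; [move=> e; apply: bI | rewrite IC].
have lead_OmI l a : lex_leading ((Omega P n m j l *m I) a 0) d ((Omega 'F_p n m j l *m C) a 0).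
  by rewrite -(map_Omega (@mpolyC n 'F_p)); apply: lex_leading_mulmx.
have [D [s [lead_P s_neq0]]] : exists D s, lex_leading (diff_prod j) D s /\ s != 0.
  by apply: lex_leading_prod => l l_neq_j; apply: XsubX_lex_leading; rewrite eq_sym.
have sum_eq a :
    \sum_(l < n | (j < l)%N) (Omega 'F_p n m j l *m C) a 0 = q%:R * (C a 0 *+ d j).
  apply: (mulfI s_neq0).
  have lead_LHS := lex_leadingM (lex_leadingZ q%:R (lex_leading_mulX_mderiv j (lead_I a))) lead_P.
  have cleared : (q%:R *: ('X_j * mderiv j (I a 0))) * diff_prod j
      = \sum_(l < n | l != j) 'X_j * diff_prod_but j l * (Omega P n m j l *m I) a 0.
    transitivity ('X_j * (q%:R * mderiv j (I a 0) * diff_prod j)).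
      by rewrite -mul_mpolyC rmorph_nat; ring.
    by rewrite (KZ_cleared j a KZ) mulr_sumr; apply: eq_bigr => l _; rewrite mulrA.
  rewrite [RHS]mulrC -lead_LHS.2 cleared raddf_sum.
  rewrite [RHS](eq_bigr (fun l : 'I_n => if (j < l)%N then s * (Omega 'F_p n m j l *m C) a 0 else 0));
    last by move=> l l_neq_j; exact: mcoeff_KZ_summand l_neq_j lead_P s_neq0 (lead_OmI l a).
  rewrite mulr_sumr big_mkcond [RHS]big_mkcond; apply: eq_bigr => l _ /=.
  by case: (eqVneq l j) => [->|_]; rewrite ?ltnn.
apply/matrixP => a b; rewrite (ord1 b) /OmegaMj mulmx_suml summxE [RHS]mxE.
under eq_bigr => l _ do rewrite OmegaM_scale -scalemxAl mxE.
by rewrite -mulr_sumr sum_eq mulrA mulVf // mul1r mulr_natl.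
Qed.

End KZLeadingTerm.

Theorem corollary5p2 (p q n : nat) (m : 'I_n -> nat)
  (Hp : prime p) (Hq : prime q) (Hn : (2 <= n)%N) (Hpn : (n < p)%N)
  (Hpq : (q < p)%N) (Hm : forall i, (0 < m i < q)%N)
  (I : 'cV[{mpoly 'F_p[n]}]_n) (C : 'cV['F_p]_n) (d : 'X_{1..n}) :
  I != 0 -> KZ_solution p q n m I -> id_leading_term p n I C d ->
  \sum_(j < n) (Mnat p q n m j)%:R * C j 0 = 0
  /\ (forall j : 'I_n, (j < n.-1)%N -> OmegaMj p q n m j *m C = (d j)%:R *: C)
  /\ (forall jn : 'I_n, nat_of_ord jn = n.-1 -> (p %| d jn)%N).
Proof.
move=> _ KZ lead.
have q_neq0 : (q%:R : 'F_p) != 0.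
  by rewrite -(dvdn_pcharf (pchar_Fp Hp)) gtnNdvd // prime_gt0.
split; first exact: sum_Mnat_leading KZ lead.
split=> [j _|jn jn_last]; first exact: KZ_OmegaMj KZ lead.
have := KZ_OmegaMj Hp q_neq0 jn KZ lead.
rewrite OmegaMj_last // mul0mx => /esym/eqP.
by rewrite scaler_eq0 (negbTE lead.1) orbF -(dvdn_pcharf (pchar_Fp Hp)).
Qed.
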